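(* Let $w\in[k]^n$ and let $m$ be a positive integer. If $\mathrm{LT}(w)\geq m$, then $w$ contains regular twins of length $m$.
   Context: $[k]=\{1,\dots,k\}$; $w[i]$ is the $i$-th letter of $w$. Two subsequences of $w$ are twins if they are equal as words and use disjoint sets of positions of $w$; $\mathrm{LT}(w)$ is the maximum length of twins in $w$. Twins $(w_1,w_2)$ are monotone if, for every $i$, the $i$-th letter of $w_1$ occurs in $w$ before the $i$-th letter of $w_2$. For monotone twins define $R=R(w_1,w_2,w)\in\{0,1,2\}^n$ by $R[i]=0$ if position $i$ is in neither twin, $R[i]=1$ if it is in $w_1$, $R[i]=2$ if it is in $w_2$. Monotone twins $(w_1,w_2)$ are regular if (a) there are no $i<j$ with $R[i]=2$, $R[j]=1$, $R[k']=0$ for all $i<k'<j$, and $w[i]=w[j]$; and (b) there are no $i<j$ with $R[i]\in\{1,2\}$, $R[j]=0$, $R[k']=0$ for all $i<k'<j$, and $w[i]=w[j]$. *)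

From mathcomp Require Import all_boot.
Set Implicit Arguments. Unset Strict Implicit. Unset Printing Implicit Defensive.

(* A word w in [k]^n is an n-tuple of letters in 'I_k (letters 0..k-1 stand
   for 1..k); positions are 'I_n (0-based).  A subsequence of w is given by
   its set S of positions; the word it spells is the letters at positions of
   S read in increasing order. *)

Section Twins.
Variables (n k : nat) (w : n.-tuple 'I_k).

Definition subword (S : {set 'I_n}) : seq 'I_k :=
  [seq tnth w i | i <- enum S].

Definition twins (S T : {set 'I_n}) : bool :=
  [disjoint S & T] && (subword S == subword T).

Definition LT : nat :=
  \max_(S : {set 'I_n}) \max_(T : {set 'I_n} | twins S T) #|S|.

Definition monotone (S T : {set 'I_n}) : bool :=
  [forall i : 'I_n, (i < #|S|) ==>
     (nth 0 [seq val x | x <- enum S] i < nth 0 [seq val x | x <- enum T] i)].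

Definition Rfun (S T : {set 'I_n}) (i : 'I_n) : nat :=
  if i \in S then 1 else if i \in T then 2 else 0.

Definition regular (S T : {set 'I_n}) : bool :=
  monotone S T &&
  [forall i : 'I_n, forall j : 'I_n,
     ~~ [&& i < j, Rfun S T i == 2, Rfun S T j == 1,
           [forall k' : 'I_n, (i < k' < j) ==> (Rfun S T k' == 0)]
         & tnth w i == tnth w j]] &&
  [forall i : 'I_n, forall j : 'I_n,
     ~~ [&& i < j, (Rfun S T i == 1) || (Rfun S T i == 2), Rfun S T j == 0,
           [forall k' : 'I_n, (i < k' < j) ==> (Rfun S T k' == 0)]
         & tnth w i == tnth w j]].

End Twins.

From mathcomp Require Import all_boot perm zify.
Set Implicit Arguments. Unset Strict Implicit. Unset Printing Implicit Defensive.

(* Twins of length at least m are cut down to length m and made monotone by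
   replacing the t-th pair of positions (p_t, q_t) by (min, max); the letters
   agree, so the words are unchanged.  Among monotone twins of length m pick
   one maximising the weight sum_x R[x] * x.  A violation of (a) or (b) is a
   pair i < j with only 0's between them, w[i] = w[j] and R[i] > R[j];
   exchanging the roles of i and j keeps the twins monotone and raises the
   weight by (R[i] - R[j]) (j - i), so the maximiser is regular. *)

Section Pointwise.
Variables (op : nat -> nat -> nat) (P Q : seq nat) (m : nat).

Definition pointwise : seq nat := mkseq (fun t => op (nth 0 P t) (nth 0 Q t)) m.

Lemma sorted_pointwise :
  (forall x y x' y', x < x' -> y < y' -> op x y < op x' y') ->
  sorted ltn P -> sorted ltn Q -> m <= size P -> m <= size Q ->
  sorted ltn pointwise.
Proof.
move=> op_mono /(sortedP 0) sP /(sortedP 0) sQ mP mQ.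
apply/(sortedP 0) => t; rewrite size_mkseq => tm.
rewrite !nth_mkseq ?(ltnW tm) //.
by apply: op_mono; [apply: sP | apply: sQ]; apply: leq_trans tm _.
Qed.

Hypothesis op_sel : forall x y, op x y = x \/ op x y = y.

Lemma all_pointwise (r : pred nat) :
  all r P -> all r Q -> m <= size P -> m <= size Q -> all r pointwise.
Proof.
move=> rP rQ mP mQ; apply/allP => x /mapP [t]; rewrite mem_iota => /andP [_ tm] ->.
have [-> | ->] := op_sel (nth 0 P t) (nth 0 Q t).
  by apply: (allP rP); apply: mem_nth; apply: leq_trans tm _.
by apply: (allP rQ); apply: mem_nth; apply: leq_trans tm _.
Qed.

Lemma map_pointwise (T : Type) (a : nat -> T) :
  map a P = map a Q -> map a pointwise = mkseq (a \o nth 0 P) m.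
Proof.
move=> aPQ; rewrite /pointwise /mkseq -map_comp; apply: eq_map => t /=.
have sizePQ : size P = size Q by rewrite -(size_map a P) aPQ size_map.
have aPQt : a (nth 0 P t) = a (nth 0 Q t).
  have [tP | tP] := ltnP t (size P); last by rewrite !nth_default -?sizePQ.
  by rewrite -!(nth_map 0 (a 0)) -?sizePQ ?aPQ.
by have [-> | ->] := op_sel (nth 0 P t) (nth 0 Q t).
Qed.

End Pointwise.

Section PointwiseMinMax.
Variables (P Q : seq nat) (m : nat).
Hypotheses (sP : sorted ltn P) (sQ : sorted ltn Q) (mP : m <= size P) (mQ : m <= size Q).
Hypothesis disjPQ : forall x, x \in P -> x \notin Q.

Lemma disjoint_nth_neq t s : t < m -> s < m -> nth 0 P t != nth 0 Q s.
Proof.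
move=> tm sm; apply: contraTneq (disjPQ (mem_nth 0 (leq_trans tm mP))) => ->.
by rewrite negbK mem_nth // (leq_trans sm mQ).
Qed.

Lemma pointwise_minn_ltn_maxn t :
  t < m -> nth 0 (pointwise minn P Q m) t < nth 0 (pointwise maxn P Q m) t.
Proof. by move=> tm; rewrite !nth_mkseq //; have := disjoint_nth_neq tm tm; lia. Qed.

Lemma pointwise_minn_maxn_disjoint x :
  x \in pointwise minn P Q m -> x \notin pointwise maxn P Q m.
Proof.
case/mapP => t; rewrite mem_iota => /andP [_ tm] ->.
apply/mapP => -[s]; rewrite mem_iota => /andP [_ sm] /eqP.
have ltP u v : u < v -> v < m -> nth 0 P u < nth 0 P v.
  by move=> uv vm; apply: (sorted_ltn_nth ltn_trans) => //; rewrite inE; lia.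
have ltQ u v : u < v -> v < m -> nth 0 Q u < nth 0 Q v.
  by move=> uv vm; apply: (sorted_ltn_nth ltn_trans) => //; rewrite inE; lia.
have := disjoint_nth_neq tm sm; have := disjoint_nth_neq sm tm; have := disjoint_nth_neq tm tm.
case: (ltngtP t s) => [ts | st | <-]; last lia.
  by have := ltP _ _ ts sm; have := ltQ _ _ ts sm; lia.
by have := ltP _ _ st tm; have := ltQ _ _ st tm; lia.
Qed.

End PointwiseMinMax.

Section OrdinalSets.
Variable n : nat.

Definition set_of_seq (P : seq nat) : {set 'I_n} := [set x : 'I_n | val x \in P].

Lemma sorted_enum_val (A : {set 'I_n}) : sorted ltn (map val (enum A)).
Proof.
rewrite -[enum _](eq_filter (mem_enum _)) -(eq_filter (mem_map val_inj _)) -filter_map.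
by rewrite (sorted_filter ltn_trans) // unlock val_ord_enum iota_ltn_sorted.
Qed.

Lemma all_enum_val (A : {set 'I_n}) : all (fun x => x < n) (map val (enum A)).
Proof. by apply/allP => _ /mapP [x _ ->]; apply: ltn_ord. Qed.

Lemma enum_set_of_seq (P : seq nat) :
  sorted ltn P -> all (fun x => x < n) P -> map val (enum (set_of_seq P)) = P.
Proof.
move=> sP ltP; apply: (irr_sorted_eq ltn_trans ltnn) => //; first exact: sorted_enum_val.
move=> x; apply/mapP/idP => [[y] | xP]; first by rewrite mem_enum inE => yP ->.
by exists (Ordinal (allP ltP x xP)); rewrite ?mem_enum ?inE.
Qed.

Lemma enum_imset_homo (f : 'I_n -> 'I_n) (A : {set 'I_n}) :
  {in A &, {homo f : x y / x < y}} -> enum (f @: A) = map f (enum A).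
Proof.
move=> f_homo.
have sorted_enum (B : {set 'I_n}) : sorted (relpre val ltn) (enum B).
  by rewrite -sorted_map sorted_enum_val.
apply: (irr_sorted_eq (leT := relpre val ltn)) => //.
- by move=> y x z; apply: ltn_trans.
- by move=> x; apply: ltnn.
- rewrite sorted_map; apply: (@sub_in_sorted _ (mem A) (relpre val ltn)).
  + by move=> x y xA yA; apply: f_homo.
  + by apply/allP => x; rewrite mem_enum.
  + exact: sorted_enum.
- move=> y; rewrite mem_enum; apply/imsetP/mapP => -[x xA ->];
  by exists x; rewrite ?mem_enum in xA *.
Qed.

Lemma enum_disjoint (A B : {set 'I_n}) :
  [disjoint A & B] -> forall x, x \in map val (enum A) -> x \notin map val (enum B).
Proof.
move=> disjAB _ /mapP [y yA ->]; rewrite mem_map ?mem_enum; last exact: val_inj.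
by rewrite mem_enum in yA; rewrite (disjointFr disjAB yA).
Qed.

End OrdinalSets.

Section Subwords.
Variables (n k : nat) (w : n.-tuple 'I_k).

Lemma size_subword (A : {set 'I_n}) : size (subword w A) = #|A|.
Proof. by rewrite size_map cardE. Qed.

Lemma card_twins (S T : {set 'I_n}) : twins w S T -> #|S| = #|T|.
Proof. by case/andP => _ /eqP eq_sub; rewrite -!size_subword eq_sub. Qed.

Lemma map_onth_enum (A : {set 'I_n}) :
  map (onth w) (map val (enum A)) = map Some (subword w A).
Proof.
rewrite /subword -!map_comp; apply: eq_map => x /=.
by rewrite onthE (nth_map (tnth w x)) ?size_tuple // -tnth_nth.
Qed.

Lemma twins_set_of_seq (P Q : seq nat) :
  sorted ltn P -> sorted ltn Q -> all (fun x => x < n) P -> all (fun x => x < n) Q ->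
  (forall x, x \in P -> x \notin Q) -> map (onth w) P = map (onth w) Q ->
  twins w (set_of_seq n P) (set_of_seq n Q).
Proof.
move=> sP sQ ltP ltQ disjPQ eqPQ; apply/andP; split.
  rewrite -setI_eq0; apply/eqP/setP => x; rewrite !inE.
  by apply/negP => /andP [xP]; apply/negP/disjPQ.
by apply/eqP/(inj_map Some_inj); rewrite -!map_onth_enum !enum_set_of_seq.
Qed.

Lemma monotone_twins_of_twins (S T : {set 'I_n}) m :
  twins w S T -> m <= #|S| -> exists S' T', [/\ twins w S' T', monotone S' T' & #|S'| = m].
Proof.
move=> twST le_m_S; have /andP [disjST /eqP eq_sub] := twST.
set P := map val (enum S); set Q := map val (enum T).
have mP : m <= size P by rewrite size_map -cardE.
have mQ : m <= size Q by rewrite size_map -cardE -(card_twins twST).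
have sel_min x y : minn x y = x \/ minn x y = y by lia.
have sel_max x y : maxn x y = x \/ maxn x y = y by lia.
have mono_min x y x' y' : x < x' -> y < y' -> minn x y < minn x' y' by lia.
have mono_max x y x' y' : x < x' -> y < y' -> maxn x y < maxn x' y' by lia.
set L := pointwise minn P Q m; set U := pointwise maxn P Q m.
have sL : sorted ltn L by apply: sorted_pointwise; rewrite ?sorted_enum_val.
have sU : sorted ltn U by apply: sorted_pointwise; rewrite ?sorted_enum_val.
have ltL : all (fun x => x < n) L by apply: all_pointwise; rewrite ?all_enum_val.
have ltU : all (fun x => x < n) U by apply: all_pointwise; rewrite ?all_enum_val.
have disjPQ := enum_disjoint disjST.
have eqPQ : map (onth w) P = map (onth w) Q by rewrite !map_onth_enum eq_sub.
have eL := enum_set_of_seq sL ltL; have eU := enum_set_of_seq sU ltU.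
exists (set_of_seq n L), (set_of_seq n U); split.
- apply: twins_set_of_seq => //; last by rewrite !map_pointwise.
  by apply: pointwise_minn_maxn_disjoint; rewrite ?sorted_enum_val.
- apply/forallP => t; apply/implyP; rewrite cardE -(size_map val) eL eU size_mkseq.
  by apply: pointwise_minn_ltn_maxn; rewrite ?sorted_enum_val.
- by rewrite cardE -(size_map val) eL size_mkseq.
Qed.

End Subwords.

Section Transpositions.
Variable n : nat.
Implicit Types (i j x : 'I_n) (A : {set 'I_n}).

Lemma tperm_homo A i j :
  i < j -> ~~ ((i \in A) && (j \in A)) -> (forall x, i < x < j -> x \notin A) ->
  {in A &, {homo tperm i j : x y / x < y}}.
Proof.
move=> ij not_both gap x y xA yA xy.
have /negP gx := contraTN (gap x) xA; have /negP gy := contraTN (gap y) yA.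
have val_neq (a b : 'I_n) : a <> b -> a <> b :> nat := fun ab e => ab (ord_inj e).
case: tpermP => [ex | ex | /val_neq nxi /val_neq nxj];
  case: tpermP => [ey | ey | /val_neq nyi /val_neq nyj];
  subst; try lia; by rewrite xA yA in not_both.
Qed.

Lemma tperm_imset A i j x : (x \in tperm i j @: A) = (tperm i j x \in A).
Proof. by rewrite (can2_imset_pre _ (tpermK i j) (tpermK i j)) inE. Qed.

Lemma sum_tperm_ltn (F : 'I_n -> nat) i j :
  i < j -> F j < F i -> \sum_x F x * x < \sum_x F x * tperm i j x.
Proof.
move=> ij Fji; have ji : j != i by rewrite -val_eqE /=; lia.
have sumD2 (G : 'I_n -> nat) :
    \sum_x G x = G i + G j + \sum_(x | (x != i) && (x != j)) G x.
  by rewrite (bigD1 i) // (bigD1 j) //= addnA.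
rewrite !sumD2 tpermL tpermR.
rewrite [\sum_(x | _) _ * tperm i j x](eq_bigr (fun x => F x * x)); last first.
  by move=> x /andP [xi xj]; rewrite tpermD // eq_sym.
by rewrite ltn_add2r; nia.
Qed.

End Transpositions.

Section Exchange.
Variables (n k : nat) (w : n.-tuple 'I_k).
Implicit Types (A S T : {set 'I_n}) (i j x : 'I_n).

Definition weight S T : nat := \sum_x Rfun S T x * x.

Definition exchangeable S T i j : Prop :=
  [/\ i < j, Rfun S T j < Rfun S T i, tnth w i = tnth w j
    & forall x, i < x < j -> Rfun S T x = 0].

Lemma irregular_exchangeable S T :
  monotone S T -> ~~ regular w S T -> exists i j, exchangeable S T i j.
Proof.
rewrite /regular => -> /=; rewrite negb_and.
case/orP => /forallPn [i /forallPn [j /negPn /and5P [ij Ri Rj /forallP gap /eqP wij]]];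
  exists i, j; split=> // [|x ixj]; try exact/eqP/(implyP (gap x)).
- by rewrite (eqP Ri) (eqP Rj).
- by rewrite (eqP Rj); case/orP: Ri => /eqP ->.
Qed.

Lemma subword_tperm A i j :
  tnth w i = tnth w j -> {in A &, {homo tperm i j : x y / x < y}} ->
  subword w (tperm i j @: A) = subword w A.
Proof.
move=> wij homo; rewrite /subword enum_imset_homo // -map_comp.
by apply: eq_map => x /=; case: tpermP => // ->.
Qed.

Lemma Rfun_tperm S T i j x :
  Rfun (tperm i j @: S) (tperm i j @: T) x = Rfun S T (tperm i j x).
Proof. by rewrite /Rfun !tperm_imset. Qed.

Section Move.
Variables (S T : {set 'I_n}) (i j : 'I_n).
Hypotheses (twST : twins w S T) (exch : exchangeable S T i j).

Let disjST : [disjoint S & T]. Proof. by case/andP: twST. Qed.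

Lemma exchange_notin_T : j \notin T.
Proof.
case: exch => _ Rji _ _; apply/negP => jT.
move: Rji; rewrite /Rfun (disjointFl disjST jT) jT.
by case: ifP => _; [|case: ifP].
Qed.

Lemma exchange_not_both_S : ~~ ((i \in S) && (j \in S)).
Proof. by case: exch => _ + _ _; rewrite /Rfun; case: (i \in S); case: (j \in S). Qed.

Lemma exchange_gap A x :
  A \subset S :|: T -> i < x < j -> x \notin A.
Proof.
move=> /subsetP subA ixj; case: exch => _ _ _ /(_ x ixj).
by apply: contra_eqN => /subA; rewrite inE /Rfun; case: (x \in S); case: (x \in T).
Qed.

Lemma exchange_homo_S : {in S &, {homo tperm i j : x y / x < y}}.
Proof.
apply: tperm_homo; first by case: exch.
  exact: exchange_not_both_S.
by move=> x; apply: exchange_gap; rewrite subsetUl.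
Qed.

Lemma exchange_homo_T : {in T &, {homo tperm i j : x y / x < y}}.
Proof.
apply: tperm_homo; first by case: exch.
  by rewrite (negbTE exchange_notin_T) andbF.
by move=> x; apply: exchange_gap; rewrite subsetUr.
Qed.

Lemma exchange_twins : twins w (tperm i j @: S) (tperm i j @: T).
Proof.
have /andP [_ /eqP eq_sub] := twST; apply/andP; split.
  rewrite -setI_eq0 -imsetI ?imset_eq0 ?setI_eq0 //.
  by move=> x y _ _; apply: perm_inj.
have [_ _ wij _] := exch.
by rewrite !subword_tperm ?eq_sub //; [apply: exchange_homo_T | apply: exchange_homo_S].
Qed.

Lemma exchange_ltn p q : p \in S -> q \in T -> p < q -> tperm i j p < tperm i j q.
Proof.
move=> pS qT pq; have [ij _ _ _] := exch.
have /negP gap_q : ~~ (i < q < j).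
  by apply: contraTN qT => /(exchange_gap (subsetUr S T)).
have val_neq (a b : 'I_n) : a <> b -> a <> b :> nat := fun ab e => ab (ord_inj e).
case: tpermP => [ep | ep | /val_neq npi /val_neq npj];
  case: tpermP => [eq | eq | /val_neq nqi /val_neq nqj];
  subst; try lia; by rewrite (negbTE exchange_notin_T) in qT.
Qed.

Lemma exchange_monotone : monotone S T -> monotone (tperm i j @: S) (tperm i j @: T).
Proof.
move=> /forallP monoST; apply/forallP => t; apply/implyP.
rewrite card_imset; last exact: perm_inj.
move=> tS; have := implyP (monoST t) tS.
have tT : t < #|T| by rewrite -(card_twins twST).
have homoS := exchange_homo_S; have homoT := exchange_homo_T.
rewrite !enum_imset_homo // -!map_comp.
rewrite !(nth_map i) ?size_map -?cardE //=.
by apply: exchange_ltn; rewrite -mem_enum mem_nth // -cardE.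
Qed.

Lemma exchange_weight : weight S T < weight (tperm i j @: S) (tperm i j @: T).
Proof.
have [ij Rji _ _] := exch.
suff -> : weight (tperm i j @: S) (tperm i j @: T) = \sum_x Rfun S T x * tperm i j x.
  exact: sum_tperm_ltn.
rewrite /weight (reindex_inj (@perm_inj _ (tperm i j))).
by apply: eq_bigr => x _; rewrite Rfun_tperm tpermK.
Qed.

End Move.
End Exchange.

Section Regularization.
Variables (n k : nat) (w : n.-tuple 'I_k).

Lemma regular_twins_of_monotone_twins (S T : {set 'I_n}) m :
  twins w S T -> monotone S T -> #|S| = m ->
  exists S' T' : {set 'I_n}, [/\ twins w S' T', regular w S' T' & #|S'| = m].
Proof.
move=> twST monoST cardS.
pose admissible (ST : {set 'I_n} * {set 'I_n}) :=
  [&& twins w ST.1 ST.2, monotone ST.1 ST.2 & #|ST.1| == m].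
have admST : admissible (S, T) by rewrite /admissible twST monoST cardS eqxx.
case: (arg_maxnP (fun ST => weight ST.1 ST.2) admST).
move=> -[S' T'] /and3P [tw' mono' /eqP card'] maxST.
exists S', T'; split=> //; apply: contraT => irreg.
have [i [j exch]] := irregular_exchangeable mono' irreg.
have := maxST (tperm i j @: S', tperm i j @: T').
rewrite /admissible /= (exchange_twins tw' exch) (exchange_monotone tw' exch mono').
rewrite card_imset ?card' ?eqxx; last exact: perm_inj.
by move=> /(_ isT); rewrite leqNgt (exchange_weight exch).
Qed.

Lemma twins_of_leq_LT m : 0 < m -> m <= LT w ->
  exists S T : {set 'I_n}, twins w S T /\ m <= #|S|.
Proof.
move=> m_gt0 le_m_LT.
suff /existsP [S /existsP [T /andP [twST le_m_S]]] :
    [exists S : {set 'I_n}, exists T : {set 'I_n}, twins w S T && (m <= #|S|)].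
  by exists S, T.
apply: contraLR le_m_LT; rewrite negb_exists => /forallP noST.
rewrite -ltnNge -(prednK m_gt0) ltnS.
apply/bigmax_leqP => S _; apply/bigmax_leqP => T twST.
by move: (noST S); rewrite negb_exists => /forallP /(_ T); rewrite twST -ltnNge; lia.
Qed.

End Regularization.

Theorem lemma18 (n k : nat) (w : n.-tuple 'I_k) (m : nat) :
  0 < m -> m <= LT w ->
  exists S T : {set 'I_n},
    [/\ twins w S T, regular w S T & #|S| = m].
Proof.
move=> m_gt0 le_m_LT.
have [S [T [twST le_m_S]]] := twins_of_leq_LT m_gt0 le_m_LT.
have [S' [T' [twST' monoST' cardS']]] := monotone_twins_of_twins twST le_m_S.
exact: regular_twins_of_monotone_twins twST' monoST' cardS'.
Qed.
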